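(* Let $0<p<\infty$ and $D>0$, and let $\Phi:[0,\infty)\to[0,\infty)$ be such that $t\mapsto\Phi(t^{1/p})$ is a Young function satisfying the $\nabla_2$-condition. Then there does not exist any continuous map $\tau:\mathbb{R}\to\mathbb{R}$ such that \[ |\tau^{-1}(E)|\le\left\{\Phi\left(\frac{1}{D|E|^{1/p}}\right)\right\}^{-1} \] holds for all Lebesgue measurable sets $E\subset\mathbb{R}$.
   Context: $|\cdot|$ denotes Lebesgue measure on $\mathbb{R}$. A Young function is a map $\Psi:[0,\infty)\to[0,\infty)$ that is positive on $(0,\infty)$, convex, with $\lim_{t\downarrow0}\Psi(t)=\Psi(0)=0$. A Young function $\Psi$ satisfies the $\nabla_2$-condition if there is a constant $k>1$ with $\Psi(t)\le\frac{1}{2k}\Psi(kt)$ for all $t>0$. Conventions $1/0=\infty$, $\Phi(\infty)=\infty$, $1/\infty=0$ are used when $|E|\in\{0,\infty\}$. *)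

From HB Require Import structures.
From mathcomp Require Import all_boot all_order all_algebra.
From mathcomp Require Import all_classical all_reals all_analysis.
Set Implicit Arguments. Unset Strict Implicit. Unset Printing Implicit Defensive.
Import Order.TTheory GRing.Theory Num.Theory.
Import numFieldNormedType.Exports.
Local Open Scope classical_set_scope.
Local Open Scope ring_scope.

Definition young_function (R : realType) (Psi : R -> R) : Prop :=
  [/\ forall t, 0 <= t -> 0 <= Psi t,
      forall t, 0 < t -> 0 < Psi t,
      forall (x y l : R), 0 <= x -> 0 <= y -> 0 <= l -> l <= 1 ->
        Psi (l * x + (1 - l) * y) <= l * Psi x + (1 - l) * Psi y,
      Psi 0 = 0 &
      Psi t @[t --> 0^'+] --> 0].

Definition nabla2 (R : realType) (Psi : R -> R) : Prop :=
  exists k : R, 1 < k /\ forall t, 0 < t -> Psi t <= (2 * k)^-1 * Psi (k * t).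

Definition erecip (R : realType) (v : R) : \bar R :=
  if v == 0 then +oo%E else (v^-1)%:E.

(* The right-hand side  { Phi ( 1 / (D |E|^{1/p}) ) }^{-1}  as a function of
   m = |E| in [0, +oo], with the conventions 1/0 = oo, Phi(oo) = oo, 1/oo = 0:
   - m = 0   : 1/(D*0) = oo, Phi(oo) = oo, 1/oo = 0, so the bound is 0;
   - m = +oo : 1/(D*oo) = 0, so the bound is 1/Phi(0) (= +oo when Phi 0 = 0);
   - 0 < m < oo : the bound is 1/Phi(1/(D m^{1/p})) (with 1/0 = oo). *)
Definition phi_bound (R : realType) (Phi : R -> R) (p D : R) (m : \bar R)
  : \bar R :=
  match m with
  | EFin r => if r == 0 then 0%E
              else erecip (Phi ((D * r `^ p^-1)^-1))
  | +oo%E => erecip (Phi 0)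
  | -oo%E => +oo%E (* impossible for a measure *)
  end.

(* With Psi t := Phi (t^(1/p)), convexity makes Psi u / u nondecreasing and
   nabla_2 gives Psi (K^n) >= (2K)^n Psi 1, so Psi is superlinear.  On the
   other hand, continuity of tau gives an interval of length 2 whose preimage
   has measure c > 0, and repeated bisection yields intervals of length
   m = 2 / 2^k whose preimages have measure at least c / 2^k.  The assumed
   bound then reads Psi u <= (2 D^p / c) u for u = 1 / (D^p m) = 2^k / (2 D^p),
   which tends to infinity: a contradiction. *)

From HB Require Import structures.
From mathcomp Require Import all_boot all_order all_algebra.
From mathcomp Require Import all_classical all_reals all_analysis.
From mathcomp Require Import ring.
Import Order.TTheory GRing.Theory Num.Theory.
Import numFieldNormedType.Exports.
Local Open Scope classical_set_scope.
Local Open Scope ring_scope.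

Lemma exists_expr2_gt {R : archiRealDomainType} (x : R) :
  exists n : nat, x < 2 ^+ n.
Proof.
have [x_le0|x_gt0] := lerP x 0.
  by exists 0%N; rewrite expr0 (le_lt_trans x_le0).
exists (Num.Def.archi_bound x); apply: lt_le_trans (archi_boundP (ltW x_gt0)) _.
by rewrite -natrX ler_nat ltnW // ltn_expl.
Qed.

Section young_growth.
Context {R : realType} {Psi : R -> R}.
Hypothesis young_Psi : young_function Psi.

Lemma young_divr_le [s u : R] : 0 < s -> s <= u -> Psi s / s <= Psi u / u.
Proof.
move=> s_gt0 le_su; have u_gt0 : 0 < u := lt_le_trans s_gt0 le_su.
have [_ _ cvx Psi0 _] := young_Psi.
have le_su1 : s / u <= 1 by rewrite ler_pdivrMr // mul1r.
have := cvx u 0 (s / u) (ltW u_gt0) (lexx 0)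
  (divr_ge0 (ltW s_gt0) (ltW u_gt0)) le_su1.
rewrite mulr0 addr0 Psi0 mulr0 addr0 divfK ?gt_eqF // => le_Psi.
rewrite ler_pdivrMr // mulrAC; apply: le_trans le_Psi _.
by rewrite mulrC mulrA.
Qed.

Lemma nabla2_iter [K : R] : 0 < K ->
  (forall t, 0 < t -> Psi t <= (2 * K)^-1 * Psi (K * t)) ->
  forall n t, 0 < t -> (2 * K) ^+ n * Psi t <= Psi (K ^+ n * t).
Proof.
move=> K_gt0 HK n t t_gt0; elim: n => [|n IH]; first by rewrite !expr0 !mul1r.
have K2_gt0 : 0 < 2 * K by rewrite mulr_gt0.
have := HK _ (mulr_gt0 (exprn_gt0 n K_gt0) t_gt0).
rewrite -(ler_pM2l K2_gt0) mulrA mulfV ?gt_eqF // mul1r mulrA -exprS => le_Psi.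
by rewrite exprS -mulrA (le_trans _ le_Psi) // ler_pM2l.
Qed.

Lemma young_nabla2_superlinear : nabla2 Psi ->
  forall M : R, exists2 u0, 0 < u0 & forall u, u0 <= u -> M * u < Psi u.
Proof.
move=> [K [K_gt1 HK]] M; have K_gt0 : 0 < K := lt_trans ltr01 K_gt1.
have [_ Psi_gt0 _ _ _] := young_Psi; have Psi1_gt0 := Psi_gt0 1 ltr01.
have [n ltMn] := exists_expr2_gt (M / Psi 1).
exists (K ^+ n) => [|u le_Ku]; first exact: exprn_gt0.
have u_gt0 : 0 < u := lt_le_trans (exprn_gt0 n K_gt0) le_Ku.
rewrite -ltr_pdivlMr //.
apply: lt_le_trans (young_divr_le (exprn_gt0 n K_gt0) le_Ku).
rewrite ltr_pdivrMr // in ltMn; apply: lt_le_trans ltMn _.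
rewrite ler_pdivlMr ?exprn_gt0 //.
by have := nabla2_iter K_gt0 HK n 1 ltr01; rewrite mulr1 exprMn mulrAC.
Qed.

End young_growth.

Section preimage_measure.
Context {R : realType}.
Notation mu := (@completed_lebesgue_measure R).

Lemma completed_lebesgue_measure_le [A B : set R] : A `<=` B -> (mu A <= mu B)%E.
Proof.
move=> AB.
rewrite /completed_lebesgue_measure /completed_lebesgue_stieltjes_measure.
rewrite /completed_measure_extension.
exact: le_mu_ext.
Qed.

Lemma completed_lebesgue_measureU2 (A B : set R) : (mu (A `|` B) <= mu A + mu B)%E.
Proof.
rewrite /completed_lebesgue_measure /completed_lebesgue_stieltjes_measure.
rewrite /completed_measure_extension.
exact: outer_measureU2.
Qed.

Lemma completed_lebesgue_measure_itv (i : interval R) :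
  mu [set` i] = lebesgue_measure [set` i].
Proof. by []. Qed.

Lemma caratheodory_measurable_itv (i : interval R) :
  measurable ([set` i] : set (caratheodory_type mu)).
Proof. by apply: sub_caratheodory; exact: measurable_itv. Qed.

Lemma preimage_itv_halve (f : R -> R) (a h c : R) :
  ((c + c)%:E <= mu (f @^-1` `[a, (a + h + h)%R]))%E ->
  exists a', (c%:E <= mu (f @^-1` `[a', (a' + h)%R]))%E.
Proof.
have cover : f @^-1` `[a, a + h + h] `<=`
    f @^-1` `[a, a + h] `|` f @^-1` `[a + h, a + h + h].
  move=> x /=; rewrite !in_itv /= => /andP[le_afx le_fxah].
  case: (lerP (f x) (a + h)) => [le|/ltW le]; [left|right];
    by rewrite ?le_afx ?le ?le_fxah.
move=> /le_trans/(_ (le_trans (completed_lebesgue_measure_le cover)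
                               (completed_lebesgue_measureU2 _ _))).
have [le_left|lt_left] := leP c%:E (mu (f @^-1` `[a, (a + h)%R])).
  by exists a.
have [le_right|lt_right] :=
  leP c%:E (mu (f @^-1` `[(a + h)%R, (a + h + h)%R])).
  by exists (a + h).
by rewrite EFinD => /(lt_le_trans (lteD lt_left lt_right)); rewrite ltxx.
Qed.

Lemma preimage_itv_dyadic [f : R -> R] [a b c : R] :
  (c%:E <= mu (f @^-1` `[a, b]))%E -> forall k : nat,
  exists a', ((c / 2 ^+ k)%:E <= mu (f @^-1` `[a', (a' + (b - a) / 2 ^+ k)%R]))%E.
Proof.
move=> le_cb; elim=> [|k [a' IH]].
  by exists a; rewrite expr0 !divr1 addrC subrK.
have halve (x : R) : x / 2 ^+ k.+1 + x / 2 ^+ k.+1 = x / 2 ^+ k.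
  by rewrite exprS; field; rewrite expf_neq0.
by apply: (preimage_itv_halve _ a'); rewrite halve -addrA halve.
Qed.

Lemma continuous_preimage_itv_measure_gt0 [f : R -> R] [x e : R] :
  {for x, continuous f} -> 0 < e ->
  exists2 c, 0 < c & (c%:E <= mu (f @^-1` `[(f x - e)%R, (f x + e)%R]))%E.
Proof.
move=> fx e_gt0.
have [r /= r_gt0 near_fx] := (nbhs_ballP _ _).1 (cvgr_dist_lt _ _ fx _ e_gt0).
exists r => //.
have sub : `](x - r), (x + r)[ `<=` f @^-1` `[(f x - e)%R, (f x + e)%R].
  move=> y; rewrite -ball_itv => /near_fx /=.
  rewrite ltr_distlC => /andP[lt1 lt2].
  by rewrite /= in_itv /= (ltW lt1) (ltW lt2).
apply: le_trans (completed_lebesgue_measure_le sub).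
rewrite completed_lebesgue_measure_itv lebesgue_measure_itv /= lte_fin ltrD2l gtrN //.
by rewrite -EFinD lee_fin opprD opprK addrACA subrr add0r lerDr ltW.
Qed.

End preimage_measure.

Lemma powRVn (R : realType) (x q : R) : 0 <= x -> x^-1 `^ q = (x `^ q)^-1.
Proof. by move=> x_ge0; rewrite -powR_inv1 // -powRrM mulN1r powRN. Qed.

Lemma erecip_neq0 (R : realType) (v : R) : v != 0 -> erecip v = (v^-1)%:E.
Proof. by rewrite /erecip => /negbTE ->. Qed.

Lemma phi_boundE (R : realType) (Phi : R -> R) (p D m : R) :
  0 < p -> 0 < D -> 0 < m ->
  phi_bound Phi p D m%:E = erecip (Phi ((D `^ p * m)^-1 `^ p^-1)).
Proof.
move=> p_gt0 D_gt0 m_gt0; rewrite /phi_bound gt_eqF //.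
rewrite [in RHS]powRVn ?ltW ?mulr_gt0 ?powR_gt0 //.
by rewrite powRM ?powR_ge0 ?ltW // -powRrM mulfV ?gt_eqF // powRr1 ?ltW.
Qed.

Theorem proposition5p2 (R : realType) (p D : R) (Phi : R -> R) :
  0 < p -> 0 < D ->
  (forall t, 0 <= t -> 0 <= Phi t) ->
  young_function (fun t => Phi (t `^ p^-1)) ->
  nabla2 (fun t => Phi (t `^ p^-1)) ->
  ~ exists tau : R -> R, continuous tau /\
      forall E : set R, measurable (E : set (caratheodory_type
                                     (@completed_lebesgue_measure R))) ->
        (@completed_lebesgue_measure R (tau @^-1` E)
          <= phi_bound Phi p D (@completed_lebesgue_measure R E))%E.
Proof.
move=> p_gt0 D_gt0 _ young_Psi nabla2_Psi [tau [tau_cont tau_bound]].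
have Dp_gt0 : 0 < D `^ p by rewrite powR_gt0.
have [c c_gt0 le_c] := continuous_preimage_itv_measure_gt0 (tau_cont 0) ltr01.
have [u0 u0_gt0 superlin] :=
  young_nabla2_superlinear young_Psi nabla2_Psi (2 * D `^ p / c).
have [k lt_k] := exists_expr2_gt (2 * D `^ p * u0).
have [a le_ca] := preimage_itv_dyadic le_c k.
rewrite (_ : tau 0 + 1 - (tau 0 - 1) = 2) in le_ca; last by ring.
set m := 2 / 2 ^+ k in le_ca.
have m_gt0 : 0 < m by rewrite divr_gt0 ?exprn_gt0.
set u := (D `^ p * m)^-1.
have uE : u = 2 ^+ k / (2 * D `^ p).
  by rewrite /u /m; field; rewrite !gt_eqF ?exprn_gt0.
have /superlin/= lt_Psi : u0 <= u.
  by rewrite uE ler_pdivlMr ?mulr_gt0 // mulrC ltW.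
have Mu : 2 * D `^ p / c * u = 2 ^+ k / c.
  by rewrite uE; field; rewrite !gt_eqF.
rewrite Mu in lt_Psi.
have Psi_gt0 : 0 < Phi (u `^ p^-1).
  by apply: lt_trans lt_Psi; rewrite divr_gt0 ?exprn_gt0.
have := tau_bound _ (caratheodory_measurable_itv `[a, a + m]).
rewrite completed_lebesgue_measure_itv lebesgue_measure_itv /= lte_fin ltrDl m_gt0.
rewrite -EFinD addrAC subrr add0r phi_boundE // -/u erecip_neq0 ?gt_eqF //.
move=> /(le_trans le_ca).
rewrite lee_fin -invf_div lef_pV2 ?posrE ?divr_gt0 ?exprn_gt0 //.
by move=> /(lt_le_trans lt_Psi); rewrite ltxx.
Qed.
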